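(* (a) For every word $r\in\{0,1\}^*$, $V([r0]_F)\geq V([r]_F)$. (b) For all integers $k\geq 0$ and all words $r'\in\{0,1\}^*$, $V([r'10^{2k+1}]_F)=V([r'10^{2k}]_F)$.
   Context: Fibonacci numbers: $F_0=0$, $F_1=1$, $F_{m+2}=F_{m+1}+F_m$. For a word $k_m\cdots k_0$ of nonnegative integer digits (in particular a word over $\{0,1\}$), $[k_m\cdots k_0]_F=\sum_{i=0}^m k_iF_{i+2}$; $0^j$ denotes $j$ copies of the digit $0$ and juxtaposition is concatenation. Standard Fibonacci words: $f_{-1}=b$, $f_0=a$, $f_{m+1}=f_mf_{m-1}$. The Fibonacci word ${\bf f}=\lim f_m$, with prefix of length $j$ denoted ${\bf f}(0..j]$. $V(N)$ is the number of factorizations of ${\bf f}(0..N]$ as $f_m^{k_m}f_{m-1}^{k_{m-1}}\cdots f_0^{k_0}$ with all $k_i\geq 0$ (i.e. into standard words $f_i$, $i\ge 0$, in non-strictly decreasing order of index), counted up to leading zero exponents; $V(0)=1$. *)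

From mathcomp Require Import all_boot.
Set Implicit Arguments. Unset Strict Implicit. Unset Printing Implicit Defensive.

Fixpoint F (n : nat) : nat :=
  match n with
  | 0 => 0
  | 1 => 1
  | (m.+1 as p).+1 => F p + F m
  end.

(* [k_m ... k_0]_F = sum_i k_i F_{i+2}; the word is listed in written order
   (most significant digit first), digits are booleans (0/1). *)
Definition valF (w : seq bool) : nat :=
  \sum_(i < size w) (nth false (rev w) i : nat) * F i.+2.

Definition la : nat := 0.
Definition lb : nat := 1.

(* fw_aux n = f_{n-1}: fw_aux 0 = f_{-1} = b, fw_aux 1 = f_0 = a,
   f_{m+1} = f_m f_{m-1}. *)
Fixpoint fw_aux (n : nat) : seq nat :=
  match n with
  | 0 => [:: lb]
  | 1 => [:: la]
  | (m.+1 as p).+1 => fw_aux p ++ fw_aux m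
  end.

Definition fw (m : nat) : seq nat := fw_aux m.+1.

(* prefix of length N of the infinite Fibonacci word (f_N has length
   F_{N+2} > N and each f_m (m >= 0) is a prefix of f_{m+1}) *)
Definition fprefix (N : nat) : seq nat := take N (fw N).

Definition factor_word (N : nat) (k : {ffun 'I_N.+1 -> 'I_N.+1}) : seq nat :=
  flatten [seq flatten (nseq (k i) (fw i)) | i <- rev (enum 'I_N.+1)].

(* V(N): number of factorizations of fprefix N as f_m^{k_m}...f_0^{k_0},
   up to leading zero exponents.  Any such factorization has k_i = 0 for
   i >= N (since |f_i| = F_{i+2} > N) and k_i <= N, so they are exactly
   the exponent vectors (k_0,...,k_N) with entries in [0, N]. *)
Definition V (N : nat) : nat :=
  #|[set k : {ffun 'I_N.+1 -> 'I_N.+1} | factor_word k == fprefix N]|.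

Example fpre : fprefix 5 = [:: 0;1;0;0;1]. Proof. by vm_compute. Qed.

(* The Fibonacci morphism phi : a -> ab, b -> a maps f_i to f_(i+1).  Hence it maps
   the prefix f(0..N] of the Fibonacci word to the prefix f(0..psi N], where
   psi N = |phi(f(0..N])|, and it maps a factorization f_m^k_m ... f_0^k_0 of the
   former to the factorization f_(m+1)^k_m ... f_1^k_0 of the latter.  Since phi is
   injective, V N <= V (psi N).  When f(0..N] ends with a, phi(f(0..N]) ends with b,
   so none of its factorizations uses f_0 = a, and all of them arise in this way:
   then V (psi N) = V N.
   For every 0/1 word r, f_m^r_m ... f_0^r_0 is a prefix of f (f_n f_(n+1) and
   f_(n+2) differ only in their last two letters), which yields
   psi [r]_F = [r0]_F and hence (a).  For (b),
   [r'10^2k]_F = [r'0(10)^k]_F + 1 = psi [r'(01)^k]_F + 1, and the letter of f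
   that follows phi(f(0..n]) is always a. *)

From mathcomp Require Import all_boot zify.
Set Implicit Arguments. Unset Strict Implicit. Unset Printing Implicit Defensive.

Lemma nat_ind2 (P : nat -> Prop) :
  P 0 -> P 1 -> (forall n, P n -> P n.+1 -> P n.+2) -> forall n, P n.
Proof.
move=> P0 P1 IH n; suff: P n /\ P n.+1 by case.
by elim: n => [|n [Pn /[dup] /(IH _ Pn)]]; split.
Qed.

Lemma FSS n : F n.+2 = F n.+1 + F n.
Proof. by []. Qed.

Lemma F_mono : {homo F : m n / m <= n}.
Proof. by apply: homo_leq leqnn leq_trans _ => -[|[|n]] //; rewrite FSS leq_addr. Qed.

Lemma ltn_F n : n < F n.+2.
Proof.
elim: n => [|n IH] //; rewrite FSS.
have : 1 <= F n.+1 by apply: (@F_mono 1).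
lia.
Qed.

Lemma fwSS n : fw n.+2 = fw n.+1 ++ fw n.
Proof. by []. Qed.

Lemma size_fw n : size (fw n) = F n.+2.
Proof. by elim/nat_ind2: n => // n IH1 IH2; rewrite fwSS size_cat IH1 IH2. Qed.

Lemma fw_binary n : all (leq^~ 1) (fw n).
Proof. by elim/nat_ind2: n => // n IH1 IH2; rewrite fwSS all_cat IH1 IH2. Qed.

Lemma fw_prefix : {homo fw : m n / m <= n >-> prefix m n}.
Proof.
apply: homo_leq (@prefix_refl _) (@prefix_trans _) _ => -[|n] //.
by rewrite fwSS prefix_prefix.
Qed.

Lemma fw_near_comm n : exists v x y,
  fw n.+2 = v ++ [:: x; y] /\ fw n ++ fw n.+1 = v ++ [:: y; x].
Proof.
elim: n => [|n [v [x [y [E1 E2]]]]]; first by exists [:: 0], 1, 0.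
exists (fw n.+1 ++ v), y, x; split; first by rewrite fwSS fwSS -catA E2 catA.
by rewrite E1 catA.
Qed.

Lemma take_prefix (T : eqType) (s t : seq T) n :
  prefix s t -> n <= size s -> take n s = take n t.
Proof. by case/prefixP=> s' -> le_ns; rewrite takel_cat. Qed.

Lemma fprefixE N m : N <= size (fw m) -> fprefix N = take N (fw m).
Proof.
have le_N : N <= size (fw N) by rewrite size_fw ltnW ?ltn_F.
move=> le_Nm; rewrite /fprefix; have [/fw_prefix pNm|/ltnW/fw_prefix pmN] := leqP N m.
  exact: take_prefix.
by rewrite (take_prefix pmN).
Qed.

Lemma size_fprefix N : size (fprefix N) = N.
Proof. by rewrite size_takel // size_fw ltnW ?ltn_F. Qed.

Lemma fprefix_prefix (u : seq nat) m : prefix u (fw m) -> fprefix (size u) = u.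
Proof.
by move=> pu; rewrite (fprefixE (size_prefix pu)); move: pu; rewrite prefixE => /eqP.
Qed.

Lemma fw_head n : exists s, fw n = 0 :: s.
Proof. by case/prefixP: (fw_prefix (leq0n n)) => s ->; exists s. Qed.

(* Letters other than a = 0 and b = 1 are fixed, so that phi is injective on all
   of seq nat. *)
Definition phi1 (x : nat) : seq nat :=
  match x with 0 => [:: 0; 1] | 1 => [:: 0] | _ => [:: x] end.
Definition phi (u : seq nat) : seq nat := flatten (map phi1 u).

Lemma phi_cat u v : phi (u ++ v) = phi u ++ phi v.
Proof. by rewrite /phi map_cat flatten_cat. Qed.

Lemma phi_fw n : phi (fw n) = fw n.+1.
Proof. by elim/nat_ind2: n => // n IH1 IH2; rewrite fwSS phi_cat IH1 IH2. Qed.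

Lemma size_phi u : size (phi u) = size u + count_mem 0 u.
Proof. by elim: u => [|[|[|x]] u IH] //=; rewrite ?size_cat IH /= ?addnS. Qed.

Fixpoint dphi (u : seq nat) : seq nat :=
  match u with
  | 0 :: 1 :: s => 0 :: dphi s
  | 0 :: s => 1 :: dphi s
  | x :: s => x :: dphi s
  | [::] => [::]
  end.

Lemma phiK : cancel phi dphi.
Proof.
have dphi0 v : dphi (0 :: phi v) = 1 :: dphi (phi v) by case: v => [|[|[|x]] v].
elim=> [|[|[|x]] u IH] //.
- by rewrite /= -/(phi u) IH.
- by rewrite -[phi _]/(0 :: phi u) dphi0 IH.
- by rewrite /= -/(phi u) IH.
Qed.

Lemma phi_inj : injective phi.
Proof. exact: can_inj phiK. Qed.

Definition psi (N : nat) : nat := size (phi (fprefix N)).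

Lemma fw_phi_fprefix n : exists s, fw n.+1 = phi (fprefix n) ++ 0 :: s.
Proof.
case E: (drop n (fw n)) => [|x s].
  have := size_drop n (fw n); rewrite E size_fw => /esym/eqP.
  by rewrite subn_eq0 leqNgt ltn_F.
have := fw_binary n; rewrite -phi_fw -(cat_take_drop n (fw n)) E all_cat phi_cat.
by move=> /andP [_ /andP [x01 _]]; case: x x01 {E} => [|[|]] // _; eexists.
Qed.

Lemma phi_fprefix n : phi (fprefix n) = fprefix (psi n).
Proof.
have [s E] := fw_phi_fprefix n.
by rewrite /psi (@fprefix_prefix _ n.+1) // E prefix_prefix.
Qed.

Lemma fprefix_psiS n : fprefix (psi n).+1 = rcons (phi (fprefix n)) 0.
Proof.
have [s E] := fw_phi_fprefix n.
rewrite (@fprefixE _ n.+1) E ?size_cat /psi ?addnS ?ltnS ?leq_addr //.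
by rewrite -addn1 takeD take_size_cat // drop_size_cat // -cats1 /= take0.
Qed.

Lemma psi_gt N : 0 < N -> N < psi N.
Proof.
have [s E] := fw_head N.
rewrite /psi size_phi size_fprefix /fprefix E.
by case: N {E} => // N _ /=; lia.
Qed.

Definition pow_fw (c i : nat) : seq nat := flatten (nseq c (fw i)).

Fixpoint prod_fw (g : nat -> nat) (n : nat) : seq nat :=
  if n is m.+1 then pow_fw (g m) m ++ prod_fw g m else [::].

Definition shift (g : nat -> nat) (i : nat) : nat := if i is j.+1 then g j else 0.

Lemma size_pow_fw c i : size (pow_fw c i) = c * F i.+2.
Proof. by elim: c => // c IH; rewrite /pow_fw /= size_cat -/(pow_fw c i) IH size_fw. Qed.

Lemma phi_pow_fw c i : phi (pow_fw c i) = pow_fw c i.+1.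
Proof. by elim: c => // c IH; rewrite /pow_fw /= phi_cat phi_fw -/(pow_fw c i) IH. Qed.

Lemma size_prod_fw g n : size (prod_fw g n) = \sum_(i < n) g i * F i.+2.
Proof.
elim: n => [|n IH]; first by rewrite big_ord0.
by rewrite big_ord_recr /= size_cat IH size_pow_fw addnC.
Qed.

Lemma eq_prod_fw g h n : g =1 h -> prod_fw g n = prod_fw h n.
Proof. by move=> eq_gh; elim: n => //= n ->; rewrite eq_gh. Qed.

Lemma prod_fw_widen g m n :
  m <= n -> (forall i, m <= i -> g i = 0) -> prod_fw g n = prod_fw g m.
Proof.
move=> /subnKC <- g0; elim: (n - m) => [|d IH]; first by rewrite addn0.
by rewrite addnS /= IH g0 ?leq_addr.
Qed.

Lemma prod_fw_split g n : prod_fw g n.+1 = phi (prod_fw (g \o succn) n) ++ nseq (g 0) 0.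
Proof.
elim: n => [|n IH]; first by rewrite /= cats0 /pow_fw; elim: (g 0) => //= c ->.
by rewrite -[prod_fw g n.+2]/(_ ++ prod_fw g n.+1) IH /= phi_cat phi_pow_fw catA.
Qed.

Lemma phi_prod_fw g n : phi (prod_fw g n) = prod_fw (shift g) n.+1.
Proof. by rewrite prod_fw_split cats0. Qed.

Lemma prod_fw_exp_bound g n i : i < n ->
  g i <= size (prod_fw g n) /\ (size (prod_fw g n) <= i -> g i = 0).
Proof.
move=> lt_in; have : g i * F i.+2 <= size (prod_fw g n).
  by rewrite size_prod_fw (bigD1 (Ordinal lt_in)) ?leq_addr.
have lt_iF := ltn_F i; case: (g i) => [|c] // le_size.
have le_F := leq_pmull (F i.+2) (ltn0Sn c).
have le_c := leq_pmulr c.+1 (leq_ltn_trans (leq0n i) lt_iF).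
split; [lia | move=> ?; lia].
Qed.

Lemma size_prod_fw_binary g n :
  (forall i, g i <= 1) -> (size (prod_fw g n)).+2 <= size (fw n.+1).
Proof.
move=> g01; elim: n => [|n IH] //=; rewrite size_cat size_pow_fw !size_fw in IH *.
have := leq_mul (g01 n) (leqnn (F n.+2)); rewrite mul1n [F n.+4]FSS; lia.
Qed.

Lemma prefix_fw_cat n (u : seq nat) :
  prefix u (fw n.+1) -> (size u).+2 <= size (fw n.+1) -> prefix (fw n ++ u) (fw n.+2).
Proof.
move=> /prefixP [t def_fw] le_u; have [v [x [y [-> E]]]] := fw_near_comm n.
apply: prefix_catl; rewrite prefixE -(takel_cat [:: y; x]); last first.
  have := congr1 size E; rewrite [size (fw n ++ fw _)]size_cat [size (v ++ _)]size_cat.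
  rewrite [size (fw n ++ u)]size_cat !size_fw [size [:: _; _]]/=.
  by rewrite size_fw in le_u; lia.
by rewrite -E def_fw catA take_size_cat.
Qed.

Lemma prefix_prod_fw_binary g n : (forall i, g i <= 1) -> prefix (prod_fw g n) (fw n.+1).
Proof.
move=> g01; elim: n => [|n IH] //=; have := g01 n.
case: (g n) => [|[|//]] _; rewrite /pow_fw /=.
  exact: prefix_trans IH (fw_prefix (leqnSn _)).
by rewrite cats0 prefix_fw_cat // size_prod_fw_binary.
Qed.

Lemma prod_fwE g n :
  prod_fw g n = flatten [seq pow_fw (g j) j | j <- rev (iota 0 n)].
Proof. by elim: n => // n IH; rewrite -addn1 iotaD rev_cat /= -IH addn1. Qed.

Section Exponents.

Variable n : nat.
Implicit Types k : {ffun 'I_n.+1 -> 'I_n.+1}.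

Definition exps k (i : nat) : nat := if i < n.+1 then k (inord i) : nat else 0.

Definition mkexps (g : nat -> nat) : {ffun 'I_n.+1 -> 'I_n.+1} :=
  [ffun i : 'I_n.+1 => inord (g i)].

Lemma exps_le k i : exps k i <= n.
Proof. by rewrite /exps; case: ifP => // _; rewrite -ltnS. Qed.

Lemma exps_out k i : n < i -> exps k i = 0.
Proof. by move=> lt_ni; rewrite /exps ltnNge lt_ni. Qed.

Lemma exps_inj k1 k2 : exps k1 =1 exps k2 -> k1 = k2.
Proof.
move=> eq_k; apply/ffunP=> i; apply: val_inj.
by have := eq_k i; rewrite /exps ltn_ord inord_val.
Qed.

Lemma mkexpsK g : (forall i, g i <= n) -> (forall i, n < i -> g i = 0) ->
  exps (mkexps g) =1 g.
Proof.
move=> g_le g_out i; rewrite /exps; case: ltnP => [lt_in|/g_out //].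
by rewrite ffunE !inordK // ltnS.
Qed.

Lemma factor_wordE k : factor_word k = prod_fw (exps k) n.+1.
Proof.
rewrite prod_fwE /factor_word -val_enum_ord -map_rev -map_comp.
by congr flatten; apply: eq_map => i /=; rewrite /exps ltn_ord inord_val.
Qed.

End Exponents.

Definition shift_ffun N {n} (k : {ffun 'I_n.+1 -> 'I_n.+1}) : {ffun 'I_N.+1 -> 'I_N.+1} :=
  mkexps N (shift (exps k)).

Section Shift.

Variables n N : nat.
Hypothesis lt_nN : n < N.

Lemma exps_shift (k : {ffun 'I_n.+1 -> 'I_n.+1}) : exps (shift_ffun N k) =1 shift (exps k).
Proof.
apply: mkexpsK => -[|i] //=; first exact: leq_trans (exps_le k i) (ltnW lt_nN).
by move=> lt_Ni; rewrite exps_out // (leq_trans lt_nN) // -ltnS.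
Qed.

Lemma shift_ffun_inj : injective (shift_ffun N (n := n)).
Proof.
move=> k1 k2 eq_k; apply: exps_inj => i.
by rewrite -[exps k1 i]/(shift (exps k1) i.+1) -exps_shift eq_k exps_shift.
Qed.

Lemma factor_word_shift (k : {ffun 'I_n.+1 -> 'I_n.+1}) :
  factor_word (shift_ffun N k) = phi (factor_word k).
Proof.
rewrite !factor_wordE phi_prod_fw (eq_prod_fw _ (exps_shift k)).
apply: prod_fw_widen => [|[|i] // lt_ni]; first by rewrite ltnS.
by rewrite /= exps_out.
Qed.

End Shift.

Definition factorizations N : {set {ffun 'I_N.+1 -> 'I_N.+1}} :=
  [set k | factor_word k == fprefix N].

Lemma card_factorizations N : #|factorizations N| = V N.
Proof. by []. Qed.

Lemma shift_factorizations N : 0 < N ->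
  shift_ffun (psi N) @: factorizations N \subset factorizations (psi N).
Proof.
move=> N_gt0; apply/subsetP=> k' /imsetP [k]; rewrite !inE => /eqP fk ->.
by rewrite factor_word_shift ?psi_gt // fk phi_fprefix.
Qed.

Lemma V_le_psi N : V N <= V (psi N).
Proof.
have [-> //|N_gt0] := posnP N.
rewrite -!card_factorizations -(card_imset _ (shift_ffun_inj (psi_gt N_gt0))).
exact: subset_leq_card (shift_factorizations N_gt0).
Qed.

Lemma rcons_nseq (T : Type) n (x : T) : rcons (nseq n x) x = nseq n.+1 x.
Proof. by elim: n => //= n ->. Qed.

Lemma last_nseqS (T : Type) c (x y : T) : last x (nseq c.+1 y) = y.
Proof. by rewrite -rcons_nseq last_rcons. Qed.

Lemma prod_fw_psi N p g :
  fprefix N = rcons p 0 -> prod_fw g (psi N).+1 = fprefix (psi N) ->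
  g 0 = 0 /\ prod_fw (g \o succn) (psi N) = fprefix N.
Proof.
move=> def_p; rewrite prod_fw_split -phi_fprefix.
case: (g 0) => [|c]; first by rewrite cats0 => /phi_inj.
by move/(congr1 (last 0)); rewrite last_cat last_nseqS def_p -cats1 phi_cat last_cat.
Qed.

Lemma factorizations_psi N p : fprefix N = rcons p 0 ->
  factorizations (psi N) \subset shift_ffun (psi N) @: factorizations N.
Proof.
move=> def_p; have lt_N : N < psi N.
  by apply: psi_gt; rewrite -(size_fprefix N) def_p size_rcons.
apply/subsetP=> k'; rewrite inE factor_wordE => /eqP /(prod_fw_psi def_p) [k'0 fk'].
have exps_bound i : exps k' i.+1 <= N /\ (N <= i -> exps k' i.+1 = 0).
  have [lt_i|le_i] := ltnP i (psi N); last by rewrite exps_out.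
  by have := prod_fw_exp_bound (exps k' \o succn) lt_i; rewrite fk' size_fprefix.
have exps_k : exps (mkexps N (exps k' \o succn)) =1 exps k' \o succn.
  by apply: mkexpsK => i; have [le_iN out_i] := exps_bound i => // /ltnW /out_i.
apply/imsetP; exists (mkexps N (exps k' \o succn)).
  rewrite inE factor_wordE (eq_prod_fw _ exps_k) -fk'.
  rewrite (prod_fw_widen (g := exps k' \o succn) lt_N) //.
  by move=> i /ltnW; have [_ out_i] := exps_bound i.
by apply: exps_inj => -[|i]; rewrite exps_shift //= exps_k.
Qed.

Lemma V_psi N p : fprefix N = rcons p 0 -> V (psi N) = V N.
Proof.
move=> def_p; have N_gt0 : 0 < N by rewrite -(size_fprefix N) def_p size_rcons.
rewrite -!card_factorizations.
have -> : factorizations (psi N) = shift_ffun (psi N) @: factorizations N.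
  by apply/eqP; rewrite eqEsubset (factorizations_psi def_p) shift_factorizations.
by rewrite card_imset //; apply/shift_ffun_inj/psi_gt.
Qed.

Definition digits (r : seq bool) (i : nat) : nat := nth false (rev r) i.

Lemma digits_rcons r : digits (rcons r false) =1 shift (digits r).
Proof. by case=> [|i]; rewrite /digits rev_rcons. Qed.

Lemma psi_valF r : psi (valF r) = valF (rcons r false).
Proof.
have pz := prefix_prod_fw_binary (size r) (fun i => leq_b1 (nth false (rev r) i)).
have size_pz : size (prod_fw (digits r) (size r)) = valF r by rewrite size_prod_fw.
rewrite /psi -size_pz (fprefix_prefix pz) phi_prod_fw -(eq_prod_fw _ (digits_rcons r)).
by rewrite size_prod_fw /valF size_rcons.
Qed.

Lemma valF_cons (b : bool) r : valF (b :: r) = b * F (size r).+2 + valF r.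
Proof.
rewrite /valF rev_cons -[size (b :: r)]/(size r).+1 big_ord_recr.
rewrite nth_rcons size_rev ltnn eqxx addnC.
by congr (_ + _); apply: eq_bigr => i _; rewrite nth_rcons size_rev (ltn_ord i).
Qed.

Lemma valF_cat_eq_size u v w :
  size v = size w -> valF (u ++ v) + valF w = valF (u ++ w) + valF v.
Proof.
move=> eq_vw; elim: u => [|b u IH]; first by rewrite addnC.
by rewrite /= !valF_cons !size_cat eq_vw -!addnA IH.
Qed.

Lemma valF_1_0s m : valF (true :: nseq m false) = F m.+2.
Proof.
rewrite valF_cons size_nseq mul1n; suff -> : valF (nseq m false) = 0 by rewrite addn0.
by elim: m => [|m IH]; [exact: big_ord0 | rewrite valF_cons IH].
Qed.

Lemma size_01s k : size (flatten (nseq k [:: false; true])) = 2 * k.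
Proof. by rewrite size_flatten /shape map_nseq sumn_nseq mulnC. Qed.

Lemma valF_01s_0 k :
  (valF (rcons (flatten (nseq k [:: false; true])) false)).+1 = F (2 * k).+2.
Proof.
elim: k => [|k IH]; first by rewrite /= valF_cons /valF big_ord0.
rewrite -[rcons _ false]/(false :: true :: rcons (flatten (nseq k [:: false; true])) false).
rewrite !valF_cons size_rcons size_01s mul0n mul1n add0n -addnS IH mulnS add2n.
by rewrite [F (2 * k).+4]FSS.
Qed.

Theorem proposition2 :
  (forall r : seq bool, V (valF r) <= V (valF (rcons r false)))
  /\
  (forall (k : nat) (r' : seq bool),
      V (valF (r' ++ true :: nseq (2 * k).+1 false))
      = V (valF (r' ++ true :: nseq (2 * k) false))).
Proof.
split=> [r|k r']; first by rewrite -psi_valF V_le_psi.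
set t := r' ++ true :: nseq (2 * k) false.
set s := flatten (nseq k [:: false; true]).
have val_t : valF t = (psi (valF (r' ++ s))).+1.
  have := valF_cat_eq_size r' (v := true :: nseq (2 * k) false) (w := rcons s false).
  rewrite size_rcons size_01s [size (true :: _)]/= size_nseq => /(_ erefl).
  by rewrite valF_1_0s -valF_01s_0 psi_valF rcons_cat -/s -/t; lia.
have [p fprefix_t] : exists p, fprefix (valF t) = rcons p 0.
  by rewrite val_t fprefix_psiS; eexists.
by rewrite -rcons_nseq -rcons_cons -rcons_cat -psi_valF (V_psi fprefix_t).
Qed.
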